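(* Let $\alpha\in(0,1]$, let $I\subseteq\mathbb R$ be an interval with $0$ in its interior, and let $\gamma:I\to\mathbb H$ be continuous with, for some $\varrho>0$, $$[\gamma_0^{-1}\gamma_t]^{\mathsf h}\le\varrho|t|^{\frac{1+\alpha}2}\quad\text{and}\quad|(\gamma_0^{-1}\gamma_t)^{\mathsf v}-t|\le\varrho^2|t|^{1+\alpha}\qquad\text{for all }t\in I.$$ Then there exists $\delta_2>0$ with $[-\delta_2,\delta_2]\subseteq I$ such that for every $\delta\in(0,\delta_2]$ there is $\varepsilon_2=\varepsilon_2(\delta)>0$ with the property: for every $x\in B(\gamma_0,\varepsilon_2)$ there exists $t=t(x)\in[-\delta,\delta]$ with $[\gamma_t^{-1}x]^{\mathsf v}\le[\gamma_t^{-1}x]^{\mathsf h}$.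
   Context: The Heisenberg group $\mathbb H$ is $\mathbb R^3$ with product $(x^1,x^2,x^3)(y^1,y^2,y^3)=(x^1+y^1,x^2+y^2,x^3+y^3+x^1y^2-x^2y^1)$, inverse $x^{-1}=-x$. For $x\in\mathbb H$: $x^{\mathsf h}=(x^1,x^2)$, $x^{\mathsf v}=x^3$, $[x]^{\mathsf h}=|x^{\mathsf h}|$, $[x]^{\mathsf v}=\sqrt{|x^3|}$. $\mathsf d$ is a fixed distance on $\mathbb H$, left-invariant and $1$-homogeneous w.r.t. dilations $\delta_r(x)=(rx^1,rx^2,r^2x^3)$; $B(x,r)$ is the open $\mathsf d$-ball. *)

From Stdlib Require Import Reals Lra.
Open Scope R_scope.

Definition H : Type := ((R * R) * R)%type.

Definition h1 (x : H) : R := fst (fst x).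
Definition h2 (x : H) : R := snd (fst x).
Definition h3 (x : H) : R := snd x.

Definition hmul (x y : H) : H :=
  ((h1 x + h1 y, h2 x + h2 y),
   h3 x + h3 y + h1 x * h2 y - h2 x * h1 y).

Definition hinv (x : H) : H := ((- h1 x, - h2 x), - h3 x).

Definition dil (r : R) (x : H) : H := ((r * h1 x, r * h2 x), r * r * h3 x).

Definition hnorm (x : H) : R := sqrt (h1 x * h1 x + h2 x * h2 x).
Definition vnorm (x : H) : R := sqrt (Rabs (h3 x)).

Definition is_hom_distance (d : H -> H -> R) : Prop :=
  (forall x y, 0 <= d x y) /\
  (forall x y, d x y = 0 <-> x = y) /\
  (forall x y, d x y = d y x) /\
  (forall x y z, d x z <= d x y + d y z) /\
  (forall p x y, d (hmul p x) (hmul p y) = d x y) /\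
  (forall r x y, 0 < r -> d (dil r x) (dil r y) = r * d x y).

(* Real power s^a for s >= 0, with the convention 0^a = 0 (a > 0). *)
Definition rpow (s a : R) : R := if Rle_dec s 0 then 0 else Rpower s a.

Definition is_interval (I : R -> Prop) : Prop :=
  forall a b t, I a -> I b -> a <= t <= b -> I t.

Definition continuous_on (I : R -> Prop) (g : R -> H) : Prop :=
  forall t, I t -> forall eps, 0 < eps -> exists del, 0 < del /\
    forall s, I s -> Rabs (s - t) < del ->
      Rabs (h1 (g s) - h1 (g t)) < eps /\
      Rabs (h2 (g s) - h2 (g t)) < eps /\
      Rabs (h3 (g s) - h3 (g t)) < eps.

(* Apply the intermediate value theorem to t |-> (gamma_t^{-1} x)^v.  With y = gamma_0^{-1} x,
   g_t = gamma_0^{-1} gamma_t and the symplectic form omega,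
   (gamma_t^{-1} x)^v = y^v - g_t^v - omega(g_t, y).  The Hölder bound makes g_{+-delta}^v of size
   at least delta/2 with the sign of +-delta.  For the length N z = d(0, z), homogeneity and left
   invariance give |y^v| <= 4 N(y)^2 / N(e_3)^2 and, through the commutator of dilated copies of
   g and y, |omega(g, y)| <= 2 (l N(g) + N(y) / l)^2 / N(e_3)^2 for every l > 0; both terms are
   small once N(y) = d(gamma_0, x) is small. *)
From Stdlib Require Import Reals Lra Ranalysis5.
Open Scope R_scope.

Definition hid : H := ((0, 0), 0).
Definition hvert (s : R) : H := ((0, 0), s).
Definition hproj (y : H) : H := ((h1 y, h2 y), 0).
Definition hpow (n : nat) (y : H) : H := ((INR n * h1 y, INR n * h2 y), INR n * h3 y).
Definition hcomm (a b : H) : H := hmul (hmul (hmul a b) (hinv a)) (hinv b).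
Definition symp (a b : H) : R := h1 a * h2 b - h2 a * h1 b.

Lemma H_ext (a b : H) : h1 a = h1 b -> h2 a = h2 b -> h3 a = h3 b -> a = b.
Proof.
  destruct a as [[a1 a2] a3], b as [[b1 b2] b3]; unfold h1, h2, h3; simpl.
  intros; subst; reflexivity.
Qed.

Ltac heis_eq :=
  apply H_ext; unfold hcomm, hpow, hproj, hvert, hid, dil, symp, hmul, hinv;
  unfold h1, h2, h3; simpl.

Lemma hmul_hid_r (a : H) : hmul a hid = a.
Proof. heis_eq; ring. Qed.

Lemma hmul_hinv_r (a : H) : hmul a (hinv a) = hid.
Proof. heis_eq; ring. Qed.

Lemma hmul_hinvKr (p x : H) : hmul p (hmul (hinv p) x) = x.
Proof. heis_eq; ring. Qed.

Lemma hpowS (n : nat) (y : H) : hpow (S n) y = hmul (hpow n y) y.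
Proof. unfold hpow; rewrite S_INR; heis_eq; ring. Qed.

Lemma hpow_dil (n : nat) (y : H) : (0 < n)%nat ->
  hpow n y = dil (INR n) ((h1 y, h2 y), h3 y / INR n).
Proof. intro hn; apply lt_0_INR in hn; heis_eq; field; lra. Qed.

Lemma hcomm_vert (a b : H) : hcomm a b = hvert (2 * symp a b).
Proof. heis_eq; ring. Qed.

Lemma symp_dil (l : R) (a b : H) : 0 < l -> symp (dil l a) (dil (/ l) b) = symp a b.
Proof. intro hl; unfold symp, dil, h1, h2; simpl; field; lra. Qed.

Lemma hproj_mul_hvert (y : H) : hmul (hinv (hproj y)) y = hvert (h3 y).
Proof. heis_eq; ring. Qed.

Lemma h3_hinv_mul_rebase (p g x : H) :
  h3 (hmul (hinv g) x) =
  h3 (hmul (hinv p) x) - h3 (hmul (hinv p) g) - symp (hmul (hinv p) g) (hmul (hinv p) x).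
Proof. unfold symp, hmul, hinv, h1, h2, h3; simpl; ring. Qed.

Lemma vnorm_le_hnorm (z : H) : h3 z = 0 -> vnorm z <= hnorm z.
Proof. intro hz; unfold vnorm; rewrite hz, Rabs_R0, sqrt_0; apply sqrt_pos. Qed.

Lemma sqrt_mul_le_sqr (x v c : R) : 0 <= x -> 0 <= v ->
  sqrt x * v <= c -> x * (v * v) <= c * c.
Proof.
  intros hx hv hc.
  pose proof (sqrt_sqrt x hx); pose proof (sqrt_pos x).
  assert (0 <= sqrt x * v) by nra.
  replace (x * (v * v)) with ((sqrt x * v) * (sqrt x * v)) by nra.
  nra.
Qed.

Lemma sqrt_mul_le_of_sqr (x v c : R) : 0 <= x -> 0 <= v -> 0 <= c ->
  x * (v * v) <= c * c -> sqrt x * v <= c.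
Proof.
  intros hx hv hc hxc.
  rewrite <- (sqrt_square c), <- (sqrt_square v) at 1 by auto.
  rewrite <- sqrt_mult by nra.
  apply sqrt_le_1_alt; lra.
Qed.

Section HomogeneousLength.

Variable d : H -> H -> R.
Hypothesis Hd : is_hom_distance d.

Definition len (z : H) : R := d hid z.

Lemma len_ge0 (z : H) : 0 <= len z.
Proof. apply Hd. Qed.

Lemma len_hid : len hid = 0.
Proof. apply Hd; reflexivity. Qed.

Lemma len_hinv_mul (p x : H) : len (hmul (hinv p) x) = d p x.
Proof.
  destruct Hd as (_ & _ & _ & _ & Hinv & _); unfold len.
  rewrite <- (Hinv p), hmul_hid_r, hmul_hinvKr; reflexivity.
Qed.

Lemma len_hinv (z : H) : len (hinv z) = len z.
Proof.
  destruct Hd as (_ & _ & Hsym & _ & Hinv & _); unfold len.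
  rewrite <- (Hinv z), hmul_hid_r, hmul_hinv_r; apply Hsym.
Qed.

Lemma len_mul (a b : H) : len (hmul a b) <= len a + len b.
Proof.
  destruct Hd as (_ & _ & _ & Htri & Hinv & _); unfold len.
  rewrite <- (Hinv a hid b), hmul_hid_r; apply Htri.
Qed.

Lemma len_dil (r : R) (z : H) : 0 < r -> len (dil r z) = r * len z.
Proof.
  destruct Hd as (_ & _ & _ & _ & _ & Hdil); unfold len; intro hr.
  rewrite <- (Hdil r hid z hr); f_equal; heis_eq; ring.
Qed.

Lemma len_hvert1_pos : 0 < len (hvert 1).
Proof.
  destruct (len_ge0 (hvert 1)) as [h|h]; auto.
  destruct Hd as (_ & Hsep & _); symmetry in h; apply Hsep in h.
  injection h; lra.
Qed.

Lemma len_hvert (s : R) : len (hvert s) = sqrt (Rabs s) * len (hvert 1).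
Proof.
  destruct (Rtotal_order s 0) as [hs|[hs|hs]].
  - replace (hvert s) with (hinv (dil (sqrt (- s)) (hvert 1))).
    + rewrite len_hinv, len_dil, Rabs_left by (try apply sqrt_lt_R0; lra); reflexivity.
    + heis_eq; rewrite ?Rmult_1_r, ?sqrt_sqrt; lra.
  - subst; rewrite Rabs_R0, sqrt_0, Rmult_0_l; apply len_hid.
  - replace (hvert s) with (dil (sqrt s) (hvert 1)).
    + rewrite len_dil, Rabs_right by (try apply sqrt_lt_R0; lra); reflexivity.
    + heis_eq; rewrite ?Rmult_1_r, ?sqrt_sqrt; lra.
Qed.

Lemma len_hpow (n : nat) (y : H) : len (hpow n y) <= INR n * len y.
Proof.
  induction n as [|n IH].
  - replace (hpow 0 y) with hid by (heis_eq; ring); rewrite len_hid; simpl; lra.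
  - rewrite hpowS, S_INR; pose proof (len_mul (hpow n y) y); lra.
Qed.

(* The horizontal projection is approached by (y1, y2, y3 / n) = dil (1/n) (y^n), whose length is
   at most len y, up to the vertical correction of length sqrt(|y3| / n) len(e3). *)
Lemma len_hproj (y : H) : len (hproj y) <= len y.
Proof.
  set (v := len (hvert 1)); pose proof len_hvert1_pos as hv; fold v in hv.
  apply Rle_plus_epsilon; intros eps heps.
  destruct (INR_unbounded (Rabs (h3 y) * (v * v) / (eps * eps))) as [n hn].
  assert (hA : 0 <= Rabs (h3 y) * (v * v) / (eps * eps))
    by (pose proof (Rabs_pos (h3 y)); apply Rmult_le_pos; [nra | left; apply Rinv_0_lt_compat; nra]).
  assert (hn0 : (0 < n)%nat) by (apply INR_lt; simpl; lra).
  pose proof (lt_0_INR _ hn0) as hw.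
  set (q := ((h1 y, h2 y), h3 y / INR n) : H).
  assert (hq : len q <= len y).
  { pose proof (len_hpow n y) as P; rewrite hpow_dil, len_dil in P by auto.
    apply Rmult_le_reg_l with (INR n); auto. }
  assert (hcorr : sqrt (Rabs (h3 y / INR n)) * v <= eps).
  { apply sqrt_mul_le_of_sqr; [apply Rabs_pos | lra | lra |].
    unfold Rdiv; rewrite Rabs_mult, Rabs_inv, (Rabs_right (INR n)) by lra.
    apply Rmult_le_reg_r with (INR n); auto.
    replace (Rabs (h3 y) * / INR n * (v * v) * INR n) with (Rabs (h3 y) * (v * v))
      by (field; lra).
    apply Rmult_lt_compat_r with (r := eps * eps) in hn; [|nra].
    unfold Rdiv in hn; rewrite Rmult_assoc, Rinv_l, Rmult_1_r in hn by nra.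
    lra. }
  replace (hproj y) with (hmul q (hvert (- (h3 y / INR n))))
    by (unfold q; heis_eq; field; lra).
  pose proof (len_mul q (hvert (- (h3 y / INR n)))) as Hmul.
  rewrite len_hvert, Rabs_Ropp in Hmul; fold v in Hmul; lra.
Qed.

Lemma h3_sqr_le (y : H) : Rabs (h3 y) * (len (hvert 1) * len (hvert 1)) <= 4 * (len y * len y).
Proof.
  replace (4 * (len y * len y)) with ((2 * len y) * (2 * len y)) by ring.
  apply sqrt_mul_le_sqr; [apply Rabs_pos | apply len_ge0 |].
  rewrite <- len_hvert, <- hproj_mul_hvert.
  pose proof (len_mul (hinv (hproj y)) y) as Hmul; rewrite len_hinv in Hmul.
  pose proof (len_hproj y); lra.
Qed.

Lemma len_hcomm (a b : H) : len (hcomm a b) <= 2 * len a + 2 * len b.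
Proof.
  unfold hcomm.
  pose proof (len_mul (hmul (hmul a b) (hinv a)) (hinv b)).
  pose proof (len_mul (hmul a b) (hinv a)); pose proof (len_mul a b).
  rewrite !len_hinv in *; lra.
Qed.

(* The commutator of dil l a and dil (1/l) b is the vertical element 2 symp a b. *)
Lemma symp_sqr_le (a b : H) (l : R) : 0 < l ->
  Rabs (symp a b) * (len (hvert 1) * len (hvert 1)) <= 2 * ((l * len a + / l * len b) ^ 2).
Proof.
  intro hl.
  pose proof (len_hcomm (dil l a) (dil (/ l) b)) as Hc.
  rewrite hcomm_vert, len_hvert, symp_dil, !len_dil in Hc
    by (auto; apply Rinv_0_lt_compat; auto).
  apply sqrt_mul_le_sqr in Hc; [| apply Rabs_pos | left; apply len_hvert1_pos].
  rewrite Rabs_mult, (Rabs_right 2) in Hc by lra; nra.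
Qed.

Lemma vertical_perturbation_small (K eta : R) : 0 < eta ->
  exists eps, 0 < eps /\ forall g y, len g <= K -> len y < eps ->
    Rabs (h3 y) + Rabs (symp g y) <= eta.
Proof.
  intro heta.
  set (v := len (hvert 1)); pose proof len_hvert1_pos as hv; fold v in hv.
  set (C := 4 + 2 * ((K + 1) * (K + 1))).
  assert (hC : 0 < C) by (unfold C; nra).
  set (eps := Rmin 1 (eta * (v * v) / C)).
  assert (he : 0 < eps)
    by (apply Rmin_glb_lt; [lra | apply Rdiv_lt_0_compat; [apply Rmult_lt_0_compat |]; nra]).
  assert (heC : eps * C <= eta * (v * v)).
  { apply Rmult_le_reg_r with (/ C); [apply Rinv_0_lt_compat; auto|].
    replace (eps * C * / C) with eps by (field; lra); apply Rmin_r. }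
  exists eps; split; auto.
  intros g y hg hy.
  assert (he1 : eps <= 1) by apply Rmin_l.
  pose proof (len_ge0 g); pose proof (len_ge0 y).
  pose proof (h3_sqr_le y) as B3; fold v in B3.
  set (l := sqrt eps).
  assert (hl : 0 < l) by (apply sqrt_lt_R0; auto).
  assert (hll : l * l = eps) by (apply sqrt_sqrt; lra).
  pose proof (symp_sqr_le g y l hl) as Bom; fold v in Bom.
  assert (hy' : / l * len y <= l).
  { apply Rmult_le_reg_l with l; auto.
    rewrite <- Rmult_assoc, Rinv_r, hll by lra; lra. }
  assert (0 <= / l * len y) by (apply Rmult_le_pos; auto; left; apply Rinv_0_lt_compat; auto).
  assert (hsum : 0 <= l * len g + / l * len y <= l * (K + 1)) by nra.
  assert ((l * len g + / l * len y) ^ 2 <= eps * ((K + 1) * (K + 1))).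
  { rewrite <- hll; replace (l * l * ((K + 1) * (K + 1))) with ((l * (K + 1)) ^ 2) by ring.
    apply pow_incr; lra. }
  assert (len y * len y <= eps) by nra.
  assert ((Rabs (h3 y) + Rabs (symp g y)) * (v * v) <= eps * C) by (unfold C; nra).
  apply Rmult_le_reg_r with (v * v); nra.
Qed.

End HomogeneousLength.

Lemma continuity_pt_h3_hinv_mul (I : R -> Prop) (gamma : R -> H) (x : H) (a r : R) :
  continuous_on I gamma -> 0 < r -> (forall t, Rabs (t - a) < r -> I t) ->
  continuity_pt (fun t => h3 (hmul (hinv (gamma t)) x)) a.
Proof.
  intros Hcont hr HI.
  assert (local : forall eps, 0 < eps -> exists del, 0 < del /\ forall s, Rabs (s - a) < del ->
      Rabs (h1 (gamma s) - h1 (gamma a)) < eps /\ Rabs (h2 (gamma s) - h2 (gamma a)) < eps /\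
      Rabs (h3 (gamma s) - h3 (gamma a)) < eps).
  { intros eps heps.
    destruct (Hcont a (HI a ltac:(rewrite Rminus_diag, Rabs_R0; lra)) eps heps) as [del [hdel Hdel]].
    exists (Rmin del r); split; [apply Rmin_glb_lt; lra|].
    intros s hs; apply Hdel;
      [apply HI | ]; eapply Rlt_le_trans; eauto; [apply Rmin_r | apply Rmin_l]. }
  assert (Hcoords : continuity_pt (fun t => h1 (gamma t)) a /\
    continuity_pt (fun t => h2 (gamma t)) a /\ continuity_pt (fun t => h3 (gamma t)) a).
  { repeat split; intros eps heps; destruct (local eps heps) as [del [hdel Hdel]];
      exists del; split; auto; intros s [_ hs]; apply Hdel, hs. }
  destruct Hcoords as (Hc1 & Hc2 & Hc3).
  (* [reg] only recognizes the coordinates as continuous once they are opaque variables. *)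
  set (g1 := fun t => h1 (gamma t)) in Hc1; set (g2 := fun t => h2 (gamma t)) in Hc2;
  set (g3 := fun t => h3 (gamma t)) in Hc3.
  change (continuity_pt (fun t => - g3 t + h3 x + - g1 t * h2 x - - g2 t * h1 x) a).
  clearbody g1 g2 g3; reg.
Qed.

Lemma exists_h3_hinv_mul_zero (d : H -> H -> R) (Hd : is_hom_distance d) (I : R -> Prop)
  (gamma : R -> H) (r delta eta : R) :
  continuous_on I gamma -> (forall t, Rabs t < r -> I t) -> 0 < delta < r -> 0 < eta ->
  h3 (hmul (hinv (gamma 0)) (gamma (- delta))) <= - eta ->
  eta <= h3 (hmul (hinv (gamma 0)) (gamma delta)) ->
  exists eps, 0 < eps /\ forall x, d (gamma 0) x < eps ->
    exists t, - delta <= t <= delta /\ h3 (hmul (hinv (gamma t)) x) = 0.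
Proof.
  intros Hcont HI [hd hdr] heta Hlo Hhi.
  set (p := gamma 0) in *.
  set (gm := hmul (hinv p) (gamma (- delta))) in *.
  set (gp := hmul (hinv p) (gamma delta)) in *.
  destruct (vertical_perturbation_small d Hd (len d gm + len d gp) (eta / 2)) as [eps [he Hsmall]];
    [lra |].
  exists eps; split; auto; intros x hx.
  rewrite <- (len_hinv_mul d Hd) in hx; set (y := hmul (hinv p) x) in *.
  pose proof (len_ge0 d Hd gm); pose proof (len_ge0 d Hd gp).
  pose proof (Hsmall gm y ltac:(lra) hx) as Sm; pose proof (Hsmall gp y ltac:(lra) hx) as Sp.
  pose proof (Rle_abs (h3 y)); pose proof (Rle_abs (- h3 y)).
  pose proof (Rle_abs (symp gm y)); pose proof (Rle_abs (- symp gp y)).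
  rewrite Rabs_Ropp in *.
  destruct (IVT_interv (fun t => - h3 (hmul (hinv (gamma t)) x)) (- delta) delta)
    as [t [ht Ht]].
  - intros a ha; apply continuity_pt_opp.
    apply (continuity_pt_h3_hinv_mul I gamma x a (r - delta)); auto; [lra |].
    intros s hs; apply HI.
    pose proof (Rabs_triang (s - a) a); replace (s - a + a) with s in * by ring.
    pose proof (Rabs_le a delta ha); lra.
  - lra.
  - rewrite (h3_hinv_mul_rebase p); fold y gm; lra.
  - rewrite (h3_hinv_mul_rebase p); fold y gp; lra.
  - exists t; split; auto; lra.
Qed.

Lemma rpow_le_half (alpha k : R) : 0 < alpha -> 0 < k ->
  exists c, 0 < c /\ forall s, 0 < s <= c -> k * rpow s (1 + alpha) <= s / 2.
Proof.
  intros ha hk.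
  set (c := Rpower (/ (2 * k)) (/ alpha)).
  assert (hcpow : Rpower c alpha = / (2 * k)).
  { unfold c; rewrite Rpower_mult, Rinv_l, Rpower_1 by (try apply Rinv_0_lt_compat; lra).
    reflexivity. }
  exists c; split; [apply exp_pos |].
  intros s hs; unfold rpow; destruct (Rle_dec s 0) as [| _]; [lra |].
  rewrite Rpower_plus, Rpower_1 by lra.
  assert (hs_pow : Rpower s alpha <= / (2 * k)) by (rewrite <- hcpow; apply Rle_Rpower_l; lra).
  apply Rmult_le_compat_l with (r := k * s) in hs_pow; [| nra].
  replace (k * s * / (2 * k)) with (s / 2) in hs_pow by (field; lra).
  lra.
Qed.

Theorem mainTheorem4
  (d : H -> H -> R) (Hd : is_hom_distance d)
  (alpha : R) (Halpha : 0 < alpha <= 1)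
  (I : R -> Prop) (HI : is_interval I)
  (HI0 : exists r, 0 < r /\ forall t, Rabs t < r -> I t)
  (gamma : R -> H) (Hcont : continuous_on I gamma)
  (rho : R) (Hrho : 0 < rho)
  (Hgam : forall t, I t ->
     hnorm (hmul (hinv (gamma 0)) (gamma t)) <= rho * rpow (Rabs t) ((1 + alpha) / 2) /\
     Rabs (h3 (hmul (hinv (gamma 0)) (gamma t)) - t) <= rho ^ 2 * rpow (Rabs t) (1 + alpha)) :
  exists delta2, 0 < delta2 /\ (forall t, - delta2 <= t <= delta2 -> I t) /\
    forall delta, 0 < delta <= delta2 ->
      exists eps2, 0 < eps2 /\
        forall x, d (gamma 0) x < eps2 ->
          exists t, - delta <= t <= delta /\
            vnorm (hmul (hinv (gamma t)) x) <= hnorm (hmul (hinv (gamma t)) x).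
Proof.
  destruct HI0 as [r [hr HIr]].
  destruct (rpow_le_half alpha (rho ^ 2)) as [c [hc Hc]]; [lra | apply pow_lt; lra |].
  exists (Rmin (r / 2) c).
  pose proof (Rmin_l (r / 2) c); pose proof (Rmin_r (r / 2) c).
  split; [apply Rmin_glb_lt; lra |]; split.
  { intros t ht; apply HIr; pose proof (Rabs_le t (Rmin (r / 2) c) ht); lra. }
  intros delta [hd0 hd2].
  assert (Hdist : forall t, Rabs t = delta ->
      Rabs (h3 (hmul (hinv (gamma 0)) (gamma t)) - t) <= delta / 2).
  { intros t ht.
    destruct (Hgam t (HIr t ltac:(lra))) as [_ B]; rewrite ht in B.
    pose proof (Hc delta ltac:(lra)); lra. }
  pose proof (Hdist delta (Rabs_right delta ltac:(lra))) as Hp.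
  pose proof (Hdist (- delta) ltac:(rewrite Rabs_Ropp, Rabs_right; lra)) as Hm.
  pose proof (Rle_abs (h3 (hmul (hinv (gamma 0)) (gamma (- delta))) - - delta)).
  pose proof (Rle_abs (- (h3 (hmul (hinv (gamma 0)) (gamma delta)) - delta))).
  rewrite Rabs_Ropp in *.
  destruct (exists_h3_hinv_mul_zero d Hd I gamma r delta (delta / 2)) as [eps [he Heps]];
    auto; try lra.
  exists eps; split; auto; intros x hx.
  destruct (Heps x hx) as [t [ht h0]].
  exists t; split; auto; apply vnorm_le_hnorm; auto.
Qed.
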